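(* For any smooth complex-valued potential $V(t,x)$, $\dim\mathfrak g^{\mathrm{ess}}_V\le7$.
   Context: $\mathfrak g_V$ denotes the maximal Lie invariance algebra of the equation $i\psi_t+\psi_{xx}+V(t,x)\psi=0$ ($\psi$ complex-valued of real $t,x$; vector fields act on $(t,x,\psi,\psi^* )$ with $\psi^*$ an additional dependent variable), considered locally. With $M=i\psi\partial_\psi-i\psi^*\partial_{\psi^*}$, $I=\psi\partial_\psi+\psi^*\partial_{\psi^*}$, $D(\tau)=\tau\partial_t+\frac12\tau_tx\partial_x+\frac18\tau_{tt}x^2M$, $G(\chi)=\chi\partial_x+\frac12\chi_txM$, the essential Lie invariance algebra is $\mathfrak g^{\mathrm{ess}}_V:=\mathfrak g_V\cap\langle D(\tau),G(\chi),\sigma(t)M,\rho(t)I\rangle$, the span being over all smooth real functions $\tau,\chi,\sigma,\rho$ of $t$. *)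

From Stdlib Require Import Reals List.
From Coquelicot Require Import Coquelicot.

Notation CC := Complex.C.

Definition dtR (f : R -> R -> R) : R -> R -> R :=
  fun t x => Derive (fun s => f s x) t.
Definition dxR (f : R -> R -> R) : R -> R -> R :=
  fun t x => Derive (fun y => f t y) x.
Definition dtC (f : R -> R -> CC) : R -> R -> CC :=
  fun t x => (dtR (fun a b => Re (f a b)) t x, dtR (fun a b => Im (f a b)) t x).
Definition dxC (f : R -> R -> CC) : R -> R -> CC :=
  fun t x => (dxR (fun a b => Re (f a b)) t x, dxR (fun a b => Im (f a b)) t x).

Definition smooth1 (f : R -> R) : Prop := forall (n : nat) (t : R), ex_derive_n f n t.

(* iterated partial derivative along a word of directions (true = t, false = x) *)
Fixpoint pd (w : list bool) (f : R -> R -> R) : R -> R -> R :=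
  match w with
  | nil => f
  | cons b w' => if b then dtR (pd w' f) else dxR (pd w' f)
  end.

Definition smooth2 (f : R -> R -> R) : Prop :=
  forall (w : list bool) (t x : R),
    ex_derive (fun s => pd w f s x) t /\ ex_derive (fun y => pd w f t y) x /\
    continuous (fun p : R * R => pd w f (fst p) (snd p)) (t, x).

Definition smooth2C (f : R -> R -> CC) : Prop :=
  smooth2 (fun t x => Re (f t x)) /\ smooth2 (fun t x => Im (f t x)).

(* ---------- vector fields ----------
   A vector field  Q = tau d_t + xi d_x + (Phi psi) d_psi + (Phic psic ) d_psic
   on the space (t,x,psi,psic), with coefficients depending on (t,x);
   all elements of the span <D(tau),G(chi),sigma M,rho I> are of this form. *)
Record VF := mkVF {
  vtau : R -> R -> R;
  vxi  : R -> R -> R;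
  vPhi : R -> R -> CC;
  vPhic : R -> R -> CC }.

Local Open Scope C_scope.

(* Second prolongation of Q (general prolongation formula, specialised to the
   coefficient form of VF), evaluated at the jet (p0,pt,px,ptx,pxx) of psi:
   eta = Phi p0, W = eta - tau pt - xi px,
   eta^t  = D_t W + tau psi_tt + xi psi_tx,
   eta^xx = D_x^2 W + tau psi_xxt + xi psi_xxx. *)
Definition eta_t (tau xi : R -> R -> R) (Phi : R -> R -> CC) (t x : R)
  (p0 pt px : CC) : CC :=
  dtC Phi t x * p0 + Phi t x * pt - RtoC (dtR tau t x) * pt - RtoC (dtR xi t x) * px.

Definition eta_xx (tau xi : R -> R -> R) (Phi : R -> R -> CC) (t x : R)
  (p0 pt px ptx pxx : CC) : CC :=
  dxC (dxC Phi) t x * p0 + RtoC 2 * dxC Phi t x * px + Phi t x * pxx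
  - RtoC (dxR (dxR tau) t x) * pt - RtoC 2 * RtoC (dxR tau t x) * ptx
  - RtoC (dxR (dxR xi) t x) * px - RtoC 2 * RtoC (dxR xi t x) * pxx.

(* Q belongs to the maximal Lie invariance algebra g_V of the system
     Delta  := i psi_t + psi_xx + V psi = 0,
     Deltac := -i psic_t + psic_xx + conj V psic = 0
   (psic treated as an additional dependent variable):
   infinitesimal invariance criterion  pr^(2) Q (Delta) = pr^(2) Q (Deltac) = 0
   on the solution manifold of the system in the second-order jet space. *)
Definition in_gV (V : R -> R -> CC) (Q : VF) : Prop :=
  forall (t x : R) (p0 pt px ptx pxx q0 qt qx qtx qxx : CC),
    Ci * pt + pxx + V t x * p0 = 0 ->
    - Ci * qt + qxx + Cconj (V t x) * q0 = 0 ->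
    Ci * eta_t (vtau Q) (vxi Q) (vPhi Q) t x p0 pt px
      + eta_xx (vtau Q) (vxi Q) (vPhi Q) t x p0 pt px ptx pxx
      + (RtoC (vtau Q t x) * dtC V t x + RtoC (vxi Q t x) * dxC V t x) * p0
      + V t x * (vPhi Q t x * p0) = 0
    /\
    - Ci * eta_t (vtau Q) (vxi Q) (vPhic Q) t x q0 qt qx
      + eta_xx (vtau Q) (vxi Q) (vPhic Q) t x q0 qt qx qtx qxx
      + (RtoC (vtau Q t x) * Cconj (dtC V t x) + RtoC (vxi Q t x) * Cconj (dxC V t x)) * q0
      + Cconj (V t x) * (vPhic Q t x * q0) = 0.

(* The vector field  D(tau) + G(chi) + sigma M + rho I, where
   D(tau) = tau d_t + 1/2 tau_t x d_x + 1/8 tau_tt x^2 M,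
   G(chi) = chi d_x + 1/2 chi_t x M,
   M = i psi d_psi - i psic d_psic,  I = psi d_psi + psic d_psic. *)
Definition essVF (tau chi sigma rho : R -> R) : VF :=
  let mcoef := fun t x =>
    (sigma t + / 8 * Derive_n tau 2 t * x ^ 2 + / 2 * Derive chi t * x)%R in
  mkVF (fun t x => tau t)
       (fun t x => (/ 2 * Derive tau t * x + chi t)%R)
       (fun t x => (rho t, mcoef t x))
       (fun t x => (rho t, - mcoef t x)%R).

Definition in_gess (V : R -> R -> CC) (tau chi sigma rho : R -> R) : Prop :=
  smooth1 tau /\ smooth1 chi /\ smooth1 sigma /\ smooth1 rho /\
  in_gV V (essVF tau chi sigma rho).

Definition lincomb_zero (n : nat) (c : nat -> R) (Q : nat -> VF) : Prop :=
  forall t x : R,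
    sum_f_R0 (fun k => c k * vtau (Q k) t x)%R (pred n) = 0%R /\
    sum_f_R0 (fun k => c k * vxi (Q k) t x)%R (pred n) = 0%R /\
    sum_f_R0 (fun k => c k * Re (vPhi (Q k) t x))%R (pred n) = 0%R /\
    sum_f_R0 (fun k => c k * Im (vPhi (Q k) t x))%R (pred n) = 0%R /\
    sum_f_R0 (fun k => c k * Re (vPhic (Q k) t x))%R (pred n) = 0%R /\
    sum_f_R0 (fun k => c k * Im (vPhic (Q k) t x))%R (pred n) = 0%R.

(* An element D(tau) + G(chi) + sigma M + rho I of g^ess_V is determined by the state
   Y = (tau, tau', tau'', chi, chi', sigma, rho) in R^7.  The real part of the classifying
   equation is a polynomial identity in x whose left side is
   sigma' + tau''' x^2 / 8 + chi'' x / 2; evaluated at x = 0, 1, -1, together with the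
   imaginary part at x = 0, it gives a linear system Y' = A(t) Y whose coefficients are
   continuous because V is smooth.  Eight solutions of a 7-dimensional linear system are
   dependent: a combination vanishing at t = 0 (linear algebra) vanishes everywhere, since
   its squared norm q satisfies |q'| <= L q on compact intervals (Gronwall). *)

From Stdlib Require Import Reals Lra Lia Classical.
From Coquelicot Require Import Coquelicot.
Open Scope R_scope.

Lemma sum_f_R0_term_le (a : nat -> R) (n i : nat) :
  (forall k, 0 <= a k) -> (i <= n)%nat -> a i <= sum_f_R0 a n.
Proof.
  intros Ha. induction n as [|n IH]; intros Hi.
  - replace i with 0%nat by lia. simpl. lra.
  - rewrite tech5. destruct (Nat.eq_dec i (S n)) as [->|Hne].
    + pose proof (cond_pos_sum a n Ha). lra.
    + pose proof (Ha (S n)). assert (a i <= sum_f_R0 a n) by (apply IH; lia). lra.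
Qed.

Lemma sum_f_R0_swap (a : nat -> nat -> R) (n m : nat) :
  sum_f_R0 (fun k => sum_f_R0 (fun j => a k j) m) n
  = sum_f_R0 (fun j => sum_f_R0 (fun k => a k j) n) m.
Proof.
  induction n as [|n IH]; simpl.
  - reflexivity.
  - rewrite IH, <- sum_plus. reflexivity.
Qed.

Lemma is_derive_sum_f_R0 (f df : nat -> R -> R) (n : nat) (t : R) :
  (forall k, (k <= n)%nat -> is_derive (f k) t (df k t)) ->
  is_derive (fun s => sum_f_R0 (fun k => f k s) n) t (sum_f_R0 (fun k => df k t) n).
Proof.
  induction n as [|n IH]; intros H; simpl.
  - apply H. lia.
  - apply (is_derive_plus (fun s => sum_f_R0 (fun k => f k s) n) (f (S n))).
    + apply IH. intros k Hk. apply H. lia.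
    + apply H. lia.
Qed.

Lemma continuous_sum_f_R0 (f : nat -> R -> R) (n : nat) (t : R) :
  (forall k, (k <= n)%nat -> continuous (f k) t) ->
  continuous (fun s => sum_f_R0 (fun k => f k s) n) t.
Proof.
  induction n as [|n IH]; intros H; simpl.
  - apply H. lia.
  - apply (continuous_plus (fun s => sum_f_R0 (fun k => f k s) n) (f (S n))).
    + apply IH. intros k Hk. apply H. lia.
    + apply H. lia.
Qed.

Lemma nonincreasing_of_derive_nonpos (g dg : R -> R) (a b : R) : a <= b ->
  (forall x, a <= x <= b -> is_derive g x (dg x) /\ dg x <= 0) -> g b <= g a.
Proof.
  intros Hab H.
  destruct (MVT_gen g a b dg) as [c [Hc E]];
    rewrite ?Rmin_left, ?Rmax_right in * by lra.
  - intros x Hx. apply H. lra.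
  - intros x Hx. apply continuity_pt_filterlim.
    apply (ex_derive_continuous g). exists (dg x). apply H. lra.
  - destruct (H c Hc) as [_ Hd].
    assert (dg c * (b - a) <= 0) by (apply Rmult_le_0_r; lra). lra.
Qed.

(* Gronwall: [f exp(-L x)] decreases to the right of [u] and [f exp(L x)] increases to its
   left. *)
Lemma gronwall_nonpos (f df : R -> R) (L a b : R) :
  (forall x, a <= x <= b -> is_derive f x (df x) /\ Rabs (df x) <= L * f x) ->
  forall u v, a <= u <= b -> a <= v <= b -> f u = 0 -> f v <= 0.
Proof.
  intros H u v Hu Hv Hfu.
  destruct (Rle_dec u v) as [Huv|Hvu].
  - assert (Hm : f v * exp (- L * v) <= f u * exp (- L * u)).
    { apply (nonincreasing_of_derive_nonpos (fun x => f x * exp (- L * x))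
        (fun x => (df x - L * f x) * exp (- L * x))); auto.
      intros x Hx. destruct (H x ltac:(lra)) as [Hd Hb]. split.
      - replace ((df x - L * f x) * exp (- L * x))
          with (df x * exp (- L * x) + f x * (exp (- L * x) * - L)) by ring.
        apply (is_derive_mult f (fun y => exp (- L * y))); [exact Hd| |exact Rmult_comm].
        auto_derive; auto. ring.
      - apply Rabs_le_between in Hb. pose proof (exp_pos (- L * x)). nra. }
    rewrite Hfu in Hm. pose proof (exp_pos (- L * v)). nra.
  - assert (Hm : - (f u * exp (L * u)) <= - (f v * exp (L * v))).
    { apply (nonincreasing_of_derive_nonpos (fun x => - (f x * exp (L * x)))
        (fun x => - ((df x + L * f x) * exp (L * x)))); [lra|].
      intros x Hx. destruct (H x ltac:(lra)) as [Hd Hb]. split.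
      - apply (is_derive_opp (fun x => f x * exp (L * x))).
        replace ((df x + L * f x) * exp (L * x))
          with (df x * exp (L * x) + f x * (exp (L * x) * L)) by ring.
        apply (is_derive_mult f (fun y => exp (L * y))); [exact Hd| |exact Rmult_comm].
        auto_derive; auto. ring.
      - apply Rabs_le_between in Hb. pose proof (exp_pos (L * x)). nra. }
    rewrite Hfu in Hm. pose proof (exp_pos (L * v)). nra.
Qed.

Lemma quadratic_form_bound (n : nat) (a : nat -> nat -> R) (z : nat -> R) :
  Rabs (sum_f_R0 (fun i => 2 * z i * sum_f_R0 (fun j => a i j * z j) n) n)
  <= 2 * sum_f_R0 (fun i => sum_f_R0 (fun j => Rabs (a i j)) n) n
       * sum_f_R0 (fun i => z i * z i) n.
Proof.
  set (q := sum_f_R0 (fun i => z i * z i) n).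
  assert (Hsq : forall i, (i <= n)%nat -> z i * z i <= q).
  { intros i Hi. apply (sum_f_R0_term_le (fun i => z i * z i)); auto.
    intros k. apply Rle_0_sqr. }
  assert (Hzz : forall i j, (i <= n)%nat -> (j <= n)%nat -> Rabs (2 * z i * z j) <= 2 * q).
  { intros i j Hi Hj. pose proof (Hsq i Hi). pose proof (Hsq j Hj).
    apply Rabs_le_between. pose proof (Rle_0_sqr (z i - z j)).
    pose proof (Rle_0_sqr (z i + z j)). unfold Rsqr in *. nra. }
  assert (Hrow : forall i, (i <= n)%nat ->
    Rabs (2 * z i * sum_f_R0 (fun j => a i j * z j) n)
    <= sum_f_R0 (fun j => Rabs (a i j)) n * (2 * q)).
  { intros i Hi.
    rewrite scal_sum.
    rewrite (Rmult_comm (sum_f_R0 _ n) (2 * q)), scal_sum.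
    eapply Rle_trans; [apply sum_f_R0_triangle|].
    apply sum_Rle. intros j Hj.
    replace (a i j * z j * (2 * z i)) with (a i j * (2 * z i * z j)) by ring.
    rewrite Rabs_mult. apply Rmult_le_compat_l; [apply Rabs_pos|]. auto. }
  eapply Rle_trans; [apply sum_f_R0_triangle|].
  eapply Rle_trans; [apply sum_Rle; exact Hrow|].
  rewrite <- scal_sum. lra.
Qed.

(* The [n+1] vectors [w 0, ..., w n] of [R^m] (coordinates [w k j], [j < m]) are linearly
   dependent. *)
Definition linearly_dependent (n m : nat) (w : nat -> nat -> R) : Prop :=
  exists c : nat -> R, (exists k, (k <= n)%nat /\ c k <> 0) /\
    forall j, (j < m)%nat -> sum_f_R0 (fun k => c k * w k j) n = 0.

Lemma sum_f_R0_indicator (n k0 : nat) (a : R) (f : nat -> R) : (k0 <= n)%nat ->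
  sum_f_R0 (fun k => (if Nat.eqb k k0 then a else 0) * f k) n = a * f k0.
Proof.
  induction n as [|n IH]; intros Hk.
  - replace k0 with 0%nat by lia. simpl. ring.
  - rewrite tech5. destruct (Nat.eqb_spec (S n) k0) as [<-|Hne].
    + rewrite (sum_eq _ (fun _ => 0)), sum_cte; [ring|].
      intros i Hi. destruct (Nat.eqb_spec i (S n)); [lia|ring].
    + rewrite IH by lia. ring.
Qed.

Lemma linearly_dependent_extend (n m : nat) (w : nat -> nat -> R) :
  linearly_dependent n m w -> (forall k, (k <= n)%nat -> w k m = 0) ->
  linearly_dependent (S n) (S m) w.
Proof.
  intros [c [[k [Hk Hck]] Hc]] Hw.
  exists (fun k => if Nat.eqb k (S n) then 0 else c k). split.
  - exists k. split; [lia|]. destruct (Nat.eqb_spec k (S n)); [lia|exact Hck].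
  - intros j Hj. rewrite tech5, Nat.eqb_refl, Rmult_0_l, Rplus_0_r.
    rewrite (sum_eq _ (fun k => c k * w k j))
      by (intros i Hi; destruct (Nat.eqb_spec i (S n)); [lia|reflexivity]).
    destruct (Nat.eq_dec j m) as [->|Hne]; [|apply Hc; lia].
    rewrite (sum_eq _ (fun _ => 0)), sum_cte; [ring|].
    intros i Hi. rewrite Hw by exact Hi. ring.
Qed.

Lemma linearly_dependent_pivot (n : nat) (w : nat -> nat -> R) :
  (forall w', linearly_dependent n n w') -> w (S n) n <> 0 ->
  linearly_dependent (S n) (S n) w.
Proof.
  intros IH Hp. set (p := w (S n) n) in *.
  destruct (IH (fun k j => w k j - w k n / p * w (S n) j)) as [c [[k [Hk Hck]] Hc]].
  exists (fun k => if Nat.eqb k (S n) then - sum_f_R0 (fun k => c k * w k n) n / p else c k).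
  split.
  - exists k. split; [lia|]. destruct (Nat.eqb_spec k (S n)); [lia|exact Hck].
  - intros j Hj. rewrite tech5, Nat.eqb_refl.
    rewrite (sum_eq _ (fun k => c k * w k j))
      by (intros i Hi; destruct (Nat.eqb_spec i (S n)); [lia|reflexivity]).
    assert (Hu : sum_f_R0 (fun k => c k * (w k j - w k n / p * w (S n) j)) n = 0).
    { destruct (Nat.eq_dec j n) as [->|Hne]; [|apply Hc; lia].
      rewrite (sum_eq _ (fun _ => 0)), sum_cte; [ring|].
      intros i _. unfold p. field. exact Hp. }
    rewrite (sum_eq _ (fun k => c k * w k j + c k * w k n * (- w (S n) j / p))) in Hu
      by (intros; unfold p; field; exact Hp).
    rewrite sum_plus, <- scal_sum in Hu. rewrite <- Hu. unfold p. field. exact Hp.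
Qed.

(* Adding [w k0] to the last vector moves a nonzero last coordinate into pivot position. *)
Lemma linearly_dependent_shear (n m k0 : nat) (w : nat -> nat -> R) : (k0 <= n)%nat ->
  linearly_dependent (S n) m
    (fun k j => if Nat.eqb k (S n) then w (S n) j + w k0 j else w k j) ->
  linearly_dependent (S n) m w.
Proof.
  intros Hk0 [c [[k [Hk Hck]] Hc]].
  exists (fun k => c k + (if Nat.eqb k k0 then c (S n) else 0)). split.
  - destruct (Req_dec (c (S n)) 0) as [H0|H0].
    + exists k. split; [exact Hk|]. rewrite H0. destruct (Nat.eqb k k0); lra.
    + exists (S n). split; [lia|]. destruct (Nat.eqb_spec (S n) k0); [lia|lra].
  - intros j Hj. specialize (Hc j Hj).
    rewrite tech5, Nat.eqb_refl in Hc.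
    rewrite (sum_eq _ (fun k => c k * w k j)) in Hc
      by (intros i Hi; destruct (Nat.eqb_spec i (S n)); [lia|reflexivity]).
    rewrite (sum_eq _ (fun k => c k * w k j + (if Nat.eqb k k0 then c (S n) else 0) * w k j))
      by (intros; ring).
    rewrite sum_plus, sum_f_R0_indicator by lia. rewrite tech5 in *. lra.
Qed.

Lemma linearly_dependent_overdetermined (n : nat) (w : nat -> nat -> R) :
  linearly_dependent n n w.
Proof.
  revert w. induction n as [|n IH]; intros w.
  - exists (fun _ => 1). split; [exists 0%nat; split; [lia|lra]|]. intros j Hj. lia.
  - destruct (Req_dec (w (S n) n) 0) as [H0|Hp]; [|exact (linearly_dependent_pivot n w IH Hp)].
    destruct (classic (exists k0, (k0 <= n)%nat /\ w k0 n <> 0)) as [[k0 [Hk0 Hw0]]|Hall].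
    + apply (linearly_dependent_shear n (S n) k0); auto.
      apply linearly_dependent_pivot; auto.
      rewrite Nat.eqb_refl, H0, Rplus_0_l. exact Hw0.
    + apply linearly_dependent_extend; auto.
      intros k Hk. apply NNPP. intros Hne. apply Hall. exists k. auto.
Qed.

(* [Z] solves the linear system [Z_i' = sum_j A_ij Z_j] of dimension [n+1] (indices [0..n]). *)
Definition linear_ode_solution (n : nat) (A : nat -> nat -> R -> R) (Z : nat -> R -> R) :=
  forall i t, (i <= n)%nat -> is_derive (Z i) t (sum_f_R0 (fun j => A i j t * Z j t) n).

Section LinearODE.

Variables (n : nat) (A : nat -> nat -> R -> R).
Hypothesis A_continuous : forall i j t, (i <= n)%nat -> (j <= n)%nat -> continuous (A i j) t.

Lemma linear_ode_sq_norm_derive (Z : nat -> R -> R) (s : R) :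
  linear_ode_solution n A Z ->
  is_derive (fun s => sum_f_R0 (fun i => Z i s * Z i s) n) s
    (sum_f_R0 (fun i => 2 * Z i s * sum_f_R0 (fun j => A i j s * Z j s) n) n).
Proof.
  intros HZ.
  apply (is_derive_sum_f_R0 (fun i s => Z i s * Z i s)
    (fun i s => 2 * Z i s * sum_f_R0 (fun j => A i j s * Z j s) n)).
  intros k Hk.
  replace (2 * Z k s * _) with
    (sum_f_R0 (fun j => A k j s * Z j s) n * Z k s
     + Z k s * sum_f_R0 (fun j => A k j s * Z j s) n)
    by ring.
  apply (is_derive_mult (Z k) (Z k)); auto. exact Rmult_comm.
Qed.

Lemma linear_ode_solution_unique (Z : nat -> R -> R) (t0 : R) :
  linear_ode_solution n A Z -> (forall i, (i <= n)%nat -> Z i t0 = 0) ->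
  forall t i, (i <= n)%nat -> Z i t = 0.
Proof.
  intros HZ HZ0 t i Hi.
  set (M := fun s => sum_f_R0 (fun i => sum_f_R0 (fun j => Rabs (A i j s)) n) n).
  set (Q := fun s => sum_f_R0 (fun i => Z i s * Z i s) n).
  destruct (continuity_ab_maj M (Rmin t0 t) (Rmax t0 t)) as [s0 [HM _]].
  { apply Rmin_Rmax. }
  { intros s _. apply continuity_pt_filterlim.
    apply continuous_sum_f_R0. intros k Hk.
    apply continuous_sum_f_R0. intros j Hj.
    apply (continuous_comp (A k j) Rabs); auto. apply continuous_Rabs. }
  assert (HQ : forall s, Rmin t0 t <= s <= Rmax t0 t ->
    is_derive Q s (sum_f_R0 (fun i => 2 * Z i s * sum_f_R0 (fun j => A i j s * Z j s) n) n)
    /\ Rabs (sum_f_R0 (fun i => 2 * Z i s * sum_f_R0 (fun j => A i j s * Z j s) n) n)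
       <= 2 * M s0 * Q s).
  { intros s Hs. split; [apply linear_ode_sq_norm_derive, HZ|].
    eapply Rle_trans; [apply quadratic_form_bound|].
    apply Rmult_le_compat_r; [apply cond_pos_sum; intros; apply Rle_0_sqr|].
    apply Rmult_le_compat_l; [lra|]. apply HM; auto. }
  assert (HQt : Q t <= 0).
  { apply (gronwall_nonpos Q _ (2 * M s0) (Rmin t0 t) (Rmax t0 t) HQ t0);
      [split; [apply Rmin_l|apply Rmax_l] | split; [apply Rmin_r|apply Rmax_r] |].
    unfold Q. rewrite (sum_eq _ (fun _ => 0)), sum_cte; [ring|].
    intros k Hk. rewrite HZ0; auto. ring. }
  assert (Hsq : Z i t * Z i t <= 0).
  { eapply Rle_trans; [|exact HQt].
    apply (sum_f_R0_term_le (fun i => Z i t * Z i t)); auto. intros; apply Rle_0_sqr. }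
  nra.
Qed.

Lemma linear_ode_solution_lincomb (m : nat) (c : nat -> R) (Y : nat -> nat -> R -> R) :
  (forall k, (k <= m)%nat -> linear_ode_solution n A (Y k)) ->
  linear_ode_solution n A (fun i t => sum_f_R0 (fun k => c k * Y k i t) m).
Proof.
  intros HY i t Hi.
  eapply is_derive_ext; [intros; reflexivity|].
  replace (sum_f_R0 _ n) with
    (sum_f_R0 (fun k => c k * sum_f_R0 (fun j => A i j t * Y k j t) n) m).
  - apply (is_derive_sum_f_R0 (fun k s => c k * Y k i s)
      (fun k s => c k * sum_f_R0 (fun j => A i j s * Y k j s) n)). intros k Hk.
    apply is_derive_scal. apply HY; auto.
  - transitivity (sum_f_R0 (fun k => sum_f_R0 (fun j => A i j t * (c k * Y k j t)) n) m).
    + apply sum_eq. intros k Hk. rewrite scal_sum. apply sum_eq. intros j Hj. ring.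
    + rewrite sum_f_R0_swap. apply sum_eq. intros j Hj. rewrite scal_sum.
      apply sum_eq. intros k Hk. ring.
Qed.

Lemma linear_ode_solutions_dependent (Y : nat -> nat -> R -> R) :
  (forall k, (k <= S n)%nat -> linear_ode_solution n A (Y k)) ->
  exists c : nat -> R, (exists k, (k <= S n)%nat /\ c k <> 0) /\
    forall t i, (i <= n)%nat -> sum_f_R0 (fun k => c k * Y k i t) (S n) = 0.
Proof.
  intros HY.
  destruct (linearly_dependent_overdetermined (S n) (fun k j => Y k j 0)) as [c [Hc Hc0]].
  exists c. split; [exact Hc|]. intros t i Hi.
  apply (linear_ode_solution_unique (fun i t => sum_f_R0 (fun k => c k * Y k i t) (S n)) 0);
    auto.
  - apply linear_ode_solution_lincomb. exact HY.
  - intros j Hj. apply Hc0. lia.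
Qed.

End LinearODE.

Lemma dtC_vPhi_essVF (tau chi sigma rho : R -> R) (t x : R) :
  smooth1 tau -> smooth1 chi -> smooth1 sigma ->
  dtC (vPhi (essVF tau chi sigma rho)) t x
  = (Derive rho t,
     Derive sigma t + / 8 * Derive_n tau 3 t * x ^ 2 + / 2 * Derive_n chi 2 t * x).
Proof.
  intros Ht Hc Hs. unfold dtC, dtR. simpl. f_equal. apply is_derive_unique.
  pose proof (Hs 1%nat t). pose proof (Ht 3%nat t). pose proof (Hc 2%nat t). simpl in *.
  auto_derive; [repeat split; auto|]. simpl. rewrite !Rmult_1_l. reflexivity.
Qed.

Lemma dxC_dxC_vPhi_essVF (tau chi sigma rho : R -> R) (t x : R) :
  dxC (dxC (vPhi (essVF tau chi sigma rho))) t x = (0, / 4 * Derive_n tau 2 t).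
Proof.
  unfold dxC, dxR. simpl. f_equal.
  - rewrite (Derive_ext _ (fun _ => 0)); [apply Derive_const|]. intros y. apply Derive_const.
  - rewrite (Derive_ext _ (fun y => / 4 * Derive_n tau 2 t * y + / 2 * Derive chi t)).
    + apply is_derive_unique. auto_derive; auto. ring.
    + intros y. apply is_derive_unique. auto_derive; auto. simpl. field.
Qed.

Lemma dxR_vxi_essVF (tau chi sigma rho : R -> R) (t x : R) :
  dxR (vxi (essVF tau chi sigma rho)) t x = / 2 * Derive tau t.
Proof. unfold dxR. apply is_derive_unique. simpl. auto_derive; auto. ring. Qed.

Definition reV (V : R -> R -> CC) : R -> R -> R := fun t x => Re (V t x).
Definition imV (V : R -> R -> CC) : R -> R -> R := fun t x => Im (V t x).

(* The invariance criterion at the jet psi = 1, psi_xx = -V (all other derivatives 0). *)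
Lemma in_gess_classifying_eqs (V : R -> R -> CC) (tau chi sigma rho : R -> R) (t x : R) :
  in_gess V tau chi sigma rho ->
  Derive sigma t + / 8 * Derive_n tau 3 t * x ^ 2 + / 2 * Derive_n chi 2 t * x
    = Derive tau t * reV V t x + tau t * dtR (reV V) t x
      + (/ 2 * Derive tau t * x + chi t) * dxR (reV V) t x
  /\ Derive rho t
    = - (/ 4 * Derive_n tau 2 t + Derive tau t * imV V t x + tau t * dtR (imV V) t x
         + (/ 2 * Derive tau t * x + chi t) * dxR (imV V) t x).
Proof.
  intros (Ht & Hc & Hs & Hr & HV).
  destruct (HV t x (1,0) (0,0) (0,0) (0,0) (Copp (V t x)) (0,0) (0,0) (0,0) (0,0) (0,0))
    as [E _];
    try (destruct (V t x); apply injective_projections; simpl; ring).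
  unfold eta_t, eta_xx in E.
  rewrite dtC_vPhi_essVF, dxC_dxC_vPhi_essVF, dxR_vxi_essVF in E by assumption.
  unfold reV, imV, dtC, dxC in *.
  generalize (f_equal fst E) (f_equal snd E). simpl. intros E1 E2.
  unfold Re, Im in *. split; lra.
Qed.

Definition ess_state (tau chi sigma rho : R -> R) (i : nat) : R -> R :=
  match i with
  | 0 => tau | 1 => Derive tau | 2 => Derive_n tau 2
  | 3 => chi | 4 => Derive chi | 5 => sigma | _ => rho
  end.

Definition re_row (V : R -> R -> CC) (x t : R) (j : nat) : R :=
  match j with
  | 0 => dtR (reV V) t x
  | 1 => reV V t x + / 2 * x * dxR (reV V) t x
  | 3 => dxR (reV V) t x
  | _ => 0
  end.

Definition im_row (V : R -> R -> CC) (t : R) (j : nat) : R :=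
  match j with
  | 0 => dtR (imV V) t 0 | 1 => imV V t 0 | 2 => / 4 | 3 => dxR (imV V) t 0 | _ => 0
  end.

Definition unit_row (i j : nat) : R := if Nat.eqb i j then 1 else 0.

(* Row [re_row V x t] expresses the right side of the real classifying equation at [x] in
   the state; combining that equation at [x = 1, -1, 0] isolates tau''', chi'' and sigma',
   and the imaginary one at [x = 0] gives rho'. *)
Definition ess_matrix (V : R -> R -> CC) (i j : nat) (t : R) : R :=
  match i with
  | 0 => unit_row 1 j | 1 => unit_row 2 j
  | 2 => 4 * (re_row V 1 t j + re_row V (-1) t j - 2 * re_row V 0 t j)
  | 3 => unit_row 4 j
  | 4 => re_row V 1 t j - re_row V (-1) t j
  | 5 => re_row V 0 t j
  | _ => - im_row V t j
  end.

Lemma ess_state_linear_ode (V : R -> R -> CC) (tau chi sigma rho : R -> R) :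
  in_gess V tau chi sigma rho ->
  linear_ode_solution 6 (ess_matrix V) (ess_state tau chi sigma rho).
Proof.
  intros H i t Hi. pose proof H as (Ht & Hc & Hs & Hr & _).
  destruct (in_gess_classifying_eqs V tau chi sigma rho t 1 H) as [E1 _].
  destruct (in_gess_classifying_eqs V tau chi sigma rho t (-1) H) as [Em1 _].
  destruct (in_gess_classifying_eqs V tau chi sigma rho t 0 H) as [E0 Eim].
  replace (sum_f_R0 _ 6) with (Derive (ess_state tau chi sigma rho i) t).
  - apply Derive_correct.
    destruct i as [|[|[|[|[|[|]]]]]];
      [exact (Ht 1%nat t)|exact (Ht 2%nat t)|exact (Ht 3%nat t)|exact (Hc 1%nat t)
      |exact (Hc 2%nat t)|exact (Hs 1%nat t)|exact (Hr 1%nat t)].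
  - change (Derive_n tau 3 t) with (Derive (Derive_n tau 2) t) in *.
    change (Derive_n chi 2 t) with (Derive (Derive chi) t) in *.
    destruct i as [|[|[|[|[|[|]]]]]];
      cbn [ess_state ess_matrix sum_f_R0 re_row im_row unit_row Nat.eqb];
      change (Derive (Derive tau) t) with (Derive_n tau 2 t); lra.
Qed.

Lemma continuous_pd_t (F : R -> R -> R) (w : list bool) (x t : R) :
  smooth2 F -> continuous (fun s => pd w F s x) t.
Proof.
  intros H. destruct (H w t x) as [_ [_ Hc]].
  apply (continuous_comp_2 (fun s => s) (fun _ => x) (pd w F)); auto.
  - apply continuous_id.
  - apply continuous_const.
Qed.

Lemma re_row_continuous (V : R -> R -> CC) (x : R) (j : nat) (t : R) :
  smooth2 (reV V) -> continuous (fun s => re_row V x s j) t.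
Proof.
  intros HR.
  destruct j as [|[|[|[|]]]]; cbn [re_row]; try apply continuous_const.
  - exact (continuous_pd_t _ (true :: nil) x t HR).
  - apply (continuous_plus (fun s => reV V s x) (fun s => / 2 * x * dxR (reV V) s x)).
    + exact (continuous_pd_t _ nil x t HR).
    + apply (continuous_scal_r (/ 2 * x) (fun s => dxR (reV V) s x)).
      exact (continuous_pd_t _ (false :: nil) x t HR).
  - exact (continuous_pd_t _ (false :: nil) x t HR).
Qed.

Lemma im_row_continuous (V : R -> R -> CC) (j : nat) (t : R) :
  smooth2 (imV V) -> continuous (fun s => im_row V s j) t.
Proof.
  intros HI.
  destruct j as [|[|[|[|]]]]; cbn [im_row]; try apply continuous_const.
  - exact (continuous_pd_t _ (true :: nil) 0 t HI).
  - exact (continuous_pd_t _ nil 0 t HI).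
  - exact (continuous_pd_t _ (false :: nil) 0 t HI).
Qed.

Lemma ess_matrix_continuous (V : R -> R -> CC) (i j : nat) (t : R) :
  smooth2C V -> continuous (ess_matrix V i j) t.
Proof.
  intros [HR HI].
  pose proof (fun x => re_row_continuous V x j t HR) as Hre.
  destruct i as [|[|[|[|[|[|]]]]]]; unfold ess_matrix; try apply continuous_const.
  - apply (continuous_scal_r 4
      (fun s => re_row V 1 s j + re_row V (-1) s j - 2 * re_row V 0 s j)).
    apply (continuous_minus (fun s => re_row V 1 s j + re_row V (-1) s j)
      (fun s => 2 * re_row V 0 s j)).
    + apply (continuous_plus (fun s => re_row V 1 s j) (fun s => re_row V (-1) s j)); auto.
    + apply (continuous_scal_r 2 (fun s => re_row V 0 s j)). auto.
  - apply (continuous_minus (fun s => re_row V 1 s j) (fun s => re_row V (-1) s j)); auto.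
  - auto.
  - apply (continuous_opp (fun s => im_row V s j)). apply im_row_continuous, HI.
Qed.

Lemma essVF_lincomb_zero (m : nat) (c : nat -> R) (tau chi sigma rho : nat -> R -> R) :
  (forall t i, (i <= 6)%nat ->
     sum_f_R0 (fun k => c k * ess_state (tau k) (chi k) (sigma k) (rho k) i t) m = 0) ->
  lincomb_zero (S m) c (fun k => essVF (tau k) (chi k) (sigma k) (rho k)).
Proof.
  intros Hz t x.
  pose proof (Hz t 0%nat ltac:(lia)) as Z0. pose proof (Hz t 1%nat ltac:(lia)) as Z1.
  pose proof (Hz t 2%nat ltac:(lia)) as Z2. pose proof (Hz t 3%nat ltac:(lia)) as Z3.
  pose proof (Hz t 4%nat ltac:(lia)) as Z4. pose proof (Hz t 5%nat ltac:(lia)) as Z5.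
  pose proof (Hz t 6%nat ltac:(lia)) as Z6.
  cbn [ess_state] in Z0, Z1, Z2, Z3, Z4, Z5, Z6.
  unfold essVF. cbn [pred vtau vxi vPhi vPhic Re Im fst snd].
  assert (Hxi : sum_f_R0 (fun k => c k * (/ 2 * Derive (tau k) t * x + chi k t)) m = 0).
  { rewrite (sum_eq _ (fun k => c k * Derive (tau k) t * (/ 2 * x) + c k * chi k t))
      by (intros; ring).
    rewrite sum_plus, <- scal_sum, Z1, Z3. ring. }
  assert (Hm : sum_f_R0 (fun k => c k * (sigma k t + / 8 * Derive_n (tau k) 2 t * x ^ 2
                                        + / 2 * Derive (chi k) t * x)) m = 0).
  { rewrite (sum_eq _ (fun k => c k * sigma k t + c k * Derive_n (tau k) 2 t * (/ 8 * x ^ 2)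
                                 + c k * Derive (chi k) t * (/ 2 * x))) by (intros; ring).
    rewrite !sum_plus, <- !scal_sum, Z5, Z2, Z4. ring. }
  repeat split; auto.
  rewrite (sum_eq _ (fun k => c k * (sigma k t + / 8 * Derive_n (tau k) 2 t * x ^ 2
                                     + / 2 * Derive (chi k) t * x) * -1)) by (intros; ring).
  rewrite <- scal_sum, Hm. ring.
Qed.

Theorem lemma1 (V : R -> R -> Complex.C) (HV : smooth2C V)
  (tau chi sigma rho : nat -> R -> R)
  (Hess : forall k : nat, (k < 8)%nat -> in_gess V (tau k) (chi k) (sigma k) (rho k)) :
  exists c : nat -> R,
    (exists k : nat, (k < 8)%nat /\ c k <> 0%R) /\
    lincomb_zero 8 c (fun k => essVF (tau k) (chi k) (sigma k) (rho k)).
Proof.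
  destruct (linear_ode_solutions_dependent 6 (ess_matrix V)
    (fun i j t _ _ => ess_matrix_continuous V i j t HV)
    (fun k => ess_state (tau k) (chi k) (sigma k) (rho k))) as [c [[k [Hk Hck]] Hz]].
  { intros k Hk. apply ess_state_linear_ode, Hess. lia. }
  exists c. split.
  - exists k. split; [lia|exact Hck].
  - apply essVF_lincomb_zero. exact Hz.
Qed.
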